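(* Let $p\in[1,\infty)$ and $\zeta\in M_p^{n-1}$. If $u_k,u\in\mathrm{Conv}_{\mathrm{coe}}^{(n)}(\mathbb{R}^n)$ are such that $\delta_{\zeta,p}(u_k,u)\to 0$, then $u_k(x_0)\to u(x_0)$ as $k\to\infty$ for every $x_0\in\mathrm{int}\,\mathrm{dom}\,u$.
   Context: $\mathrm{Conv}_{\mathrm{coe}}^{(n)}(\mathbb{R}^n)$ is the set of proper, lower semicontinuous, convex, coercive $u:\mathbb{R}^n\to\mathbb{R}\cup\{+\infty\}$ with $\mathrm{dom}\,u=\{u<+\infty\}$ of dimension $n$. $M_p^{n-1}$ is the set of continuous, strictly decreasing $\zeta:\mathbb{R}\to(0,\infty)$ with $\int_0^\infty\zeta(t)^pt^{n-1}dt<\infty$. $\delta_{\zeta,p}(u,v)=\left(\int_{\mathbb{R}^n}|\zeta(u(x))-\zeta(v(x))|^pdx\right)^{1/p}$ with $\zeta(+\infty):=0$. *)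

From HB Require Import structures.
From mathcomp Require Import all_boot all_order all_algebra.
From mathcomp Require Import all_classical all_reals all_analysis.
Set Implicit Arguments. Unset Strict Implicit. Unset Printing Implicit Defensive.
Import Order.TTheory GRing.Theory Num.Theory.
Import numFieldNormedType.Exports.
Local Open Scope classical_set_scope.
Local Open Scope ring_scope.

Section Defs.
Context {R : realType}.

Definition edom (n : nat) (u : 'rV[R]_n -> \bar R) : set 'rV[R]_n :=
  [set x | (u x < +oo)%E].

(* Affine dimension of A equals n: A contains n+1 affinely independent
   points (i.e. the affine hull of A is all of R^n). *)
Definition affdim_full (n : nat) (A : set 'rV[R]_n) : Prop :=
  exists x : 'I_n.+1 -> 'rV[R]_n,
    (forall i, A (x i)) /\
    row_free (\matrix_(i < n) (x (lift ord0 i) - x ord0)).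

Definition convex_fun (n : nat) (u : 'rV[R]_n -> \bar R) : Prop :=
  forall (x y : 'rV[R]_n) (l : R), 0 < l < 1 ->
    (u ((1 - l) *: x + l *: y)%R <= (1 - l)%:E * u x + l%:E * u y)%E.

Definition coercive (n : nat) (u : 'rV[R]_n -> \bar R) : Prop :=
  forall M : R, exists r : R, forall x : 'rV[R]_n, r < `|x| -> (M%:E < u x)%E.

Definition Conv_coe (n : nat) (u : 'rV[R]_n -> \bar R) : Prop :=
  [/\ (forall x, u x != -oo%E),
      (exists x, u x != +oo%E),
      lower_semicontinuous u &
  [/\
      convex_fun u,
      coercive u
    & affdim_full (edom u)]].

Definition M_p (p : R) (n : nat) (zeta : R -> R) : Prop :=
  [/\ continuous zeta,
      (forall s t, s < t -> zeta t < zeta s),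
      (forall t, 0 < zeta t)
    & (\int[(@lebesgue_measure R)]_(t in [set t : R | (0 <= t)%R])
         ((zeta t `^ p) * t ^+ (n - 1))%R%:E < +oo)%E].

Definition zeta_ext (zeta : R -> R) (e : \bar R) : R :=
  match e with
  | EFin r => zeta r
  | _ => 0
  end.

(* Lebesgue integral over R^n of a nonnegative function, written as the
   iterated one-dimensional Lebesgue integral (Tonelli). *)
Fixpoint int_Rn (n : nat) : ('rV[R]_n -> \bar R) -> \bar R :=
  match n return ('rV[R]_n -> \bar R) -> \bar R with
  | 0 => fun f => f 0
  | k.+1 => fun f =>
      (\int[(@lebesgue_measure R)]_(t in [set: R])
         int_Rn (fun y : 'rV[R]_k => f (row_mx (\row_(i < 1) t) y)))%E
  end.

Definition delta (zeta : R -> R) (p : R) (n : nat)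
    (u v : 'rV[R]_n -> \bar R) : \bar R :=
  poweR (int_Rn (fun x => (`|zeta_ext zeta (u x) - zeta_ext zeta (v x)| `^ p)%R%:E))
        p^-1.

End Defs.

From HB Require Import structures.
From mathcomp Require Import all_boot all_order all_algebra.
From mathcomp Require Import all_classical all_reals all_analysis.
From mathcomp Require Import ring lra.
Import Order.TTheory GRing.Theory Num.Theory.
Import numFieldNormedType.Exports.
Import HBNNSimple.
Local Open Scope classical_set_scope.
Local Open Scope ring_scope.

(* A cube of side [h] on which [|zeta (u_ k) - zeta u| >= c] contributes
   [(c^p h^n)^(1/p)] to [delta zeta p (u_ k) u], so for large [k] no such cube
   exists.  Upper bound at [x0]: if [u_ k x0 >= u x0 + eps], the convex sublevel
   set [{u_ k <= u x0 + eps/2}] misses [x0], hence (by induction on the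
   dimension) a whole closed orthant at [x0]; on the other hand convexity of [u],
   through its values at the vertices [x0 +- r e_i] of a small cross-polytope,
   gives [u <= u x0 + eps/4] on small boxes at [x0], and a box in that orthant is
   such a cube.  Lower bound: the upper bound at the vertices bounds [u_ k]
   uniformly, so if [u_ k x0 <= u x0 - eps] convexity gives
   [u_ k <= u x0 - 3 eps/4] on a small box at [x0], whereas [u > u x0 - eps/2]
   there by lower semicontinuity. *)

Section integral_lower_bounds.
Context {R : realType}.

(* The integrand need not be measurable, so we bound the integral from below
   by the integral of a simple function below it. *)
Lemma integral_ge_interval (f : R -> \bar R) (a h c : R) :
  0 <= c -> 0 <= h -> (forall x, (0 <= f x)%E) ->
  (forall x, a <= x <= a + h -> (c%:E <= f x)%E) ->
  ((c * h)%:E <= \int[(@lebesgue_measure R)]_(x in [set: R]) f x)%E.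
Proof.
move=> c0 h0 f0 fc.
have mI : @measurable _ (measurableTypeR R) [set` `[a, a + h]].
  exact: measurable_itv.
pose g := scale_nnsfun (@indic_nnsfun _ (measurableTypeR R) R _ mI) c0.
rewrite ge0_integralTE //; apply: le_trans (ereal_sup_ubound _); last first.
  exists g => // x; rewrite /= /measurable_realfun.mindic /indic.
  case: (boolP (_ \in _)) => [|_] /=; last by rewrite mulr0 f0.
  by rewrite mulr1 inE /= in_itv => /fc.
rewrite (_ : sintegral _ _ =
  sintegral (@lebesgue_measure R) (cst c \* indic_nnsfun R mI)%R) //.
rewrite sintegralrM sintegral_indic.
rewrite [X in (_ * X)%E](lebesgue_measure_itv `[a, a + h]) /= lte_fin.
have [ah|] := ltrP a (a + h); first by rewrite -EFinD addrAC subrr add0r.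
by rewrite gerDl => hle; have -> : h = 0 by apply/le_anti; rewrite hle h0.
Qed.

Lemma int_Rn_ge0 n (f : 'rV[R]_n -> \bar R) :
  (forall x, (0 <= f x)%E) -> (0 <= int_Rn f)%E.
Proof.
elim: n f => [|k IH] f f0 /=; first exact: f0.
by apply: integral_ge0 => t _; exact: IH.
Qed.

Definition cube {n} (lo : 'rV[R]_n) (h : R) : set 'rV[R]_n :=
  [set x | forall i, lo 0 i <= x 0 i <= lo 0 i + h].

Lemma int_Rn_ge_cube n (f : 'rV[R]_n -> \bar R) (lo : 'rV[R]_n) (h c : R) :
  0 <= c -> 0 <= h -> (forall x, (0 <= f x)%E) ->
  (forall x, cube lo h x -> (c%:E <= f x)%E) ->
  ((c * h ^+ n)%:E <= int_Rn f)%E.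
Proof.
elim: n f lo => [|k IH] f lo c0 h0 f0 fc /=.
  by rewrite expr0 mulr1; apply: fc => -[].
rewrite exprSr mulrA; apply: (@integral_ge_interval _ (lo 0 0)) => //.
- by rewrite mulr_ge0 // exprn_ge0.
- by move=> t; apply: int_Rn_ge0.
move=> t tI; apply: (IH _ (rsubmx (lo : 'M[R]_(1, 1 + k)))) => // y yI.
apply: fc => i; case: (split_ordP (i : 'I_(1 + k))) => j ->.
  rewrite (ord1 j) (@row_mxEl R 1 1 k) mxE.
  by rewrite (_ : lshift k 0 = 0) //; exact: val_inj.
by rewrite (@row_mxEr R 1 1 k); move: (yI j); rewrite mxE.
Qed.

End integral_lower_bounds.

Section signed_boxes.
Context {R : realType} {n : nat}.

Definition sgn (b : bool) (t : R) : R := if b then t else - t.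

Definition signed (sg : 'I_n -> bool) (v : 'rV[R]_n) : 'rV[R]_n :=
  \row_i sgn (sg i) (v 0 i).

Lemma normr_sgn b t : `|sgn b t| = `|t|.
Proof. by case: b; rewrite ?normrN. Qed.

Lemma cube_signed (y : 'rV[R]_n) (sg : 'I_n -> bool) (h : R) (x : 'rV[R]_n) :
  cube (\row_j (if sg j then y 0 j else y 0 j - h)) h x ->
  exists2 v : 'rV[R]_n, (forall i, 0 <= v 0 i <= h) & x = y + signed sg v.
Proof.
move=> xI; exists (\row_i sgn (sg i) (x 0 i - y 0 i)).
  by move=> i; have := xI i; rewrite !mxE /sgn; case: (sg i) => /andP[? ?]; lra.
by apply/rowP => i; rewrite !mxE /sgn; case: (sg i); rewrite ?opprK; lra.
Qed.

End signed_boxes.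

Section delta_lower_bound.
Context {R : realType}.
Variables (zeta : R -> R) (p : R).
Hypotheses (p_gt0 : 0 < p) (zeta_decr : forall s t, s < t -> zeta t < zeta s)
  (zeta_gt0 : forall t, 0 < zeta t).

Lemma delta_ge_cube n (v u : 'rV[R]_n -> \bar R) (lo : 'rV[R]_n) (h c : R) :
  0 < c -> 0 <= h ->
  (forall x, cube lo h x -> c <= `|zeta_ext zeta (v x) - zeta_ext zeta (u x)|) ->
  (((c `^ p * h ^+ n) `^ p^-1)%:E <= delta zeta p v u)%E.
Proof.
move=> c0 h0 gap; rewrite /delta -poweR_EFin.
set I := int_Rn _.
have chn0 : 0 <= c `^ p * h ^+ n by rewrite mulr_ge0 ?powR_ge0 ?exprn_ge0.
have I0 : (0 <= I)%E by apply: int_Rn_ge0 => x; rewrite lee_fin powR_ge0.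
have chnI : ((c `^ p * h ^+ n)%:E <= I)%E.
  apply: (@int_Rn_ge_cube _ _ _ lo); rewrite ?powR_ge0 // => x /gap cx.
  by rewrite lee_fin ge0_ler_powR // ?ltW // nnegrE ltW // (lt_le_trans c0).
apply: gt0_ler_poweR => //; first by rewrite invr_ge0 ltW.
  by rewrite in_itv /= lee_fin chn0 leey.
by rewrite in_itv /= I0 leey.
Qed.

Lemma delta_lt_orthant_box n (v u : 'rV[R]_n -> \bar R) (y : 'rV[R]_n)
    (sg : 'I_n -> bool) (h c : R) :
  0 < c -> 0 <= h -> (delta zeta p v u < ((c `^ p * h ^+ n) `^ p^-1)%:E)%E ->
  exists2 w : 'rV[R]_n, (forall i, 0 <= w 0 i <= h) &
    `|zeta_ext zeta (v (y + signed sg w)) - zeta_ext zeta (u (y + signed sg w))| < c.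
Proof.
move=> c0 h0; apply: contraPP => /forall2NP no_w.
apply/negP; rewrite -leNgt.
apply: (@delta_ge_cube _ _ _ (\row_j (if sg j then y 0 j else y 0 j - h))) => //.
move=> x /cube_signed[w wI ->].
by case: (no_w w) => [/(_ wI)|/negP]; rewrite // -leNgt.
Qed.

Lemma zeta_ext_gap (e1 e2 : \bar R) (s t : R) :
  e1 != -oo%E -> (e1 <= s%:E)%E -> (t%:E < e2)%E ->
  zeta s - zeta t <= `|zeta_ext zeta e1 - zeta_ext zeta e2|.
Proof.
move=> e1N e1s te2; apply: le_trans (ler_norm _); apply: lerB.
  move: e1 e1N e1s => [r| |] //= _; rewrite ?leey_eq // lee_fin.
  by rewrite le_eqVlt => /predU1P[->|/zeta_decr/ltW].
by move: e2 te2 => [r| |] //= => [/zeta_decr/ltW|_]; [|exact: ltW].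
Qed.

End delta_lower_bound.

Section convex_functions.
Context {R : realType} {n : nat}.
Implicit Types (f : 'rV[R]_n -> \bar R) (x y : 'rV[R]_n).

Lemma convex_fun_le_comb f x y (l a b : R) :
  convex_fun f -> 0 < l < 1 -> (f x <= a%:E)%E -> (f y <= b%:E)%E ->
  (f ((1 - l) *: x + l *: y)%R <= ((1 - l) * a + l * b)%:E)%E.
Proof.
move=> cf l01 fa fb; apply: le_trans (cf _ _ _ l01) _.
have /andP[l0 l1] := l01.
apply: le_trans (leeD (lee_wpmul2l _ fa) (lee_wpmul2l _ fb)) _.
- by rewrite lee_fin subr_ge0 ltW.
- by rewrite lee_fin ltW.
- by rewrite -!EFinM -EFinD.
Qed.

Lemma convex_fun_le_sum f (I : Type) (s : seq I) (d : I -> 'rV[R]_n)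
    (w : I -> R) x0 (a b : R) :
  convex_fun f -> (f x0 <= a%:E)%E -> (forall i, (f (x0 + d i)%R <= b%:E)%E) ->
  (forall i, 0 <= w i) -> \sum_(i <- s) w i < 1 ->
  (f (x0 + \sum_(i <- s) w i *: d i)%R <= (a + (\sum_(i <- s) w i) * (b - a))%:E)%E.
Proof.
move=> cf fa fb w0; elim: s w w0 => [|j s IH] w w0.
  by rewrite !big_nil addr0 mul0r addr0.
rewrite !big_cons => Ws.
set W := \sum_(i <- s) w i in Ws *.
have W0 : 0 <= W by apply: sumr_ge0.
have [wj0|wj_neq0] := eqVneq (w j) 0.
  by rewrite wj0 scale0r !add0r; apply: IH => //; move: Ws; rewrite wj0 add0r.
have wj_gt0 : 0 < w j by rewrite lt_neqAle eq_sym wj_neq0 w0.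
have wj_lt1 : w j < 1 by apply: le_lt_trans Ws; rewrite lerDl.
have wj1 : 1 - w j != 0 by rewrite subr_eq0 gt_eqF.
pose w' i := w i / (1 - w j).
have w'0 i : 0 <= w' i by rewrite divr_ge0 // subr_ge0 ltW.
have W' : \sum_(i <- s) w' i = W / (1 - w j) by rewrite -mulr_suml.
have W'1 : \sum_(i <- s) w' i < 1 by rewrite W' ltr_pdivrMr ?subr_gt0 // mul1r; lra.
have := @convex_fun_le_comb _ _ _ (w j) _ _ cf _ (IH _ w'0 W'1) (fb j).
have -> : (1 - w j) *: (x0 + \sum_(i <- s) w' i *: d i) + w j *: (x0 + d j) =
    x0 + (w j *: d j + \sum_(i <- s) w i *: d i).
  rewrite !scalerDr scaler_sumr.
  under eq_bigr do rewrite scalerA mulrCA divff // mulr1.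
  by rewrite scalerBl scale1r addrAC [_ - _ + (_ + _)]addrA subrK -addrA.
rewrite W' wj_gt0 wj_lt1 => /(_ isT)/le_trans; apply; rewrite lee_fin.
by rewrite le_eqVlt; apply/orP; left; apply/eqP; field.
Qed.

Definition vertex y (r : R) (s : bool) (i : 'I_n) : 'rV[R]_n := y + sgn s r *: 'e_i.

(* A point of the orthant box of side [h] is a convex combination of [y] and
   the vertices [y +- r e_i], with total weight [n h / r] on the vertices. *)
Lemma convex_fun_le_orthant_box f y (r h a b : R) (sg : 'I_n -> bool)
    (v : 'rV[R]_n) :
  convex_fun f -> 0 < r -> (f y <= a%:E)%E ->
  (forall i s, (f (vertex y r s i) <= b%:E)%E) ->
  (forall i, 0 <= v 0 i <= h) -> n%:R * h / r < 1 ->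
  (f (y + signed sg v)%R <= (a + n%:R * h / r * `|b - a|)%:E)%E.
Proof.
move=> cf r0 fa fb vI nhr.
pose w i := v 0 i / r.
have w0 i : 0 <= w i by case/andP: (vI i) => v0 _; rewrite divr_ge0 // ltW.
have W0 : 0 <= \sum_(i < n) w i by apply: sumr_ge0.
have Wnhr : \sum_(i < n) w i <= n%:R * h / r.
  rewrite -mulr_suml ler_pM2r ?invr_gt0 //.
  apply: le_trans (ler_sum _ (fun i _ => proj2 (andP (vI i)))) _.
  by rewrite sumr_const card_ord mulr_natl.
have := @convex_fun_le_sum f _ (index_enum 'I_n) (fun i => sgn (sg i) r *: 'e_i)
  w y a b cf fa (fun i => fb i (sg i)) w0 (le_lt_trans Wnhr nhr).
have -> : signed sg v = \sum_(i < n) w i *: (sgn (sg i) r *: 'e_i).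
  rewrite [LHS]row_sum_delta; apply: eq_bigr => i _.
  rewrite scalerA mxE /w /sgn; congr (_ *: _).
  by case: (sg i); field; rewrite gt_eqF.
move/le_trans; apply; rewrite lee_fin lerD2l.
apply: le_trans (ler_wpM2l W0 (ler_norm _)) _.
by apply: ler_wpM2r.
Qed.

End convex_functions.

Section convex_sets.
Context {R : realType}.

Definition rV_convex {n} (S : set 'rV[R]_n) : Prop :=
  forall a b (l : R), S a -> S b -> 0 < l < 1 -> S ((1 - l) *: a + l *: b).

Lemma convex_fun_sublevel n (f : 'rV[R]_n -> \bar R) (y : 'rV[R]_n) (a : R) :
  convex_fun f -> rV_convex [set w | (f (y + w)%R <= a%:E)%E].
Proof.
move=> cf w1 w2 l fw1 fw2 l01 /=.
have -> : y + ((1 - l) *: w1 + l *: w2) = (1 - l) *: (y + w1) + l *: (y + w2).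
  by rewrite !scalerDr addrACA -scalerDl subrK scale1r.
apply: le_trans (convex_fun_le_comb _ _ _ _ _ _ cf l01 fw1 fw2) _.
by rewrite lee_fin; lra.
Qed.

Definition slice {k} (S : set 'rV[R]_(1 + k)) (b : bool) : set 'rV[R]_k :=
  [set y | exists2 t, 0 <= t & S (row_mx (\row_(_ < 1) sgn b t) y)].

Lemma slice_convex k (S : set 'rV[R]_(1 + k)) b :
  rV_convex S -> rV_convex (slice S b).
Proof.
move=> cS y1 y2 l [t1 t10 S1] [t2 t20 S2] l01; have /andP[l0 l1] := l01.
exists ((1 - l) * t1 + l * t2); first by nra.
have := cS _ _ l S1 S2 l01; rewrite !scale_row_mx add_row_mx.
congr (S (row_mx _ _)); apply/rowP => i; rewrite !mxE /sgn.
by case: (b); ring.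
Qed.

(* If both slices contained [0], the segment between the two witnesses on the
   first axis would pass through [0]. *)
Lemma slice_notin0 k (S : set 'rV[R]_(1 + k)) :
  rV_convex S -> ~ S 0 -> exists b, ~ slice S b 0.
Proof.
move=> cS S0.
have [[t1 t10 S1]|] := pselect (slice S true 0); last by exists true.
have [[t2 t20 S2]|] := pselect (slice S false 0); last by exists false.
have row0 : row_mx (\row_(_ < 1) (0 : R)) (0 : 'rV[R]_k) = 0.
  by rewrite -row_mx0; congr row_mx; apply/rowP => i; rewrite !mxE.
have [t1_0|t1_neq0] := eqVneq t1 0; first by move: S1; rewrite /sgn t1_0 row0.
have [t2_0|t2_neq0] := eqVneq t2 0; first by move: S2; rewrite /sgn t2_0 oppr0 row0.
have t1_gt0 : 0 < t1 by rewrite lt_neqAle eq_sym t1_neq0.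
have t2_gt0 : 0 < t2 by rewrite lt_neqAle eq_sym t2_neq0.
have t12 : t1 + t2 != 0 by rewrite gt_eqF ?addr_gt0.
exfalso; apply: S0; have := cS _ _ (t1 / (t1 + t2)) S1 S2.
rewrite !scale_row_mx add_row_mx !scaler0 addr0.
have -> : (1 - t1 / (t1 + t2)) *: \row_(_ < 1) sgn true t1 +
    t1 / (t1 + t2) *: \row_(_ < 1) sgn false t2 = \row_(_ < 1) (0 : R).
  by apply/rowP => i; rewrite !mxE /sgn; field.
rewrite row0; apply; rewrite divr_gt0 ?addr_gt0 //=.
by rewrite ltr_pdivrMr ?addr_gt0 // mul1r ltrDl.
Qed.

Lemma signed_row_mx k (b : bool) (sg : 'I_k -> bool) (v : 'rV[R]_(1 + k)) :
  signed (fun i => if fintype.split i is inr j then sg j else b) v =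
  row_mx (\row_(_ < 1) sgn b (v 0 0)) (signed sg (rsubmx v)).
Proof.
apply/rowP => i; rewrite mxE; case: (split_ordP i) => j ->.
  by rewrite row_mxEl (ord1 j) !mxE (_ : lshift k 0 = 0) //; exact: val_inj.
by rewrite row_mxEr !mxE.
Qed.

Lemma convex_orthant_avoid n (S : set 'rV[R]_n) :
  rV_convex S -> ~ S 0 ->
  exists sg : 'I_n -> bool, forall v : 'rV[R]_n,
    (forall i, 0 <= v 0 i) -> ~ S (signed sg v).
Proof.
elim: n S => [|k IH] S cS S0; first by exists (fun=> true) => v _; rewrite thinmx0.
have [b Sb0] := @slice_notin0 k S cS S0.
have [sg Hsg] := IH _ (@slice_convex k S b cS) Sb0.
exists (fun i : 'I_(1 + k) => if fintype.split i is inr j then sg j else b) => v v0.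
rewrite signed_row_mx => Sv.
apply: (Hsg (rsubmx (v : 'M[R]_(1, 1 + k)))) => [i|]; first by rewrite mxE.
by exists (v 0 0).
Qed.

End convex_sets.

Section small_boxes.
Context {R : realType} {n : nat}.
Implicit Types (y : 'rV[R]_n) (A : set 'rV[R]_n).

Lemma nbhs_rV_add_small y A :
  nbhs y A -> \forall c \near 0^'+,
    forall w : 'rV[R]_n, (forall j, `|w 0 j| <= c) -> A (y + w).
Proof.
case/nbhs_ballP => e e0 yeA; near=> c => w wc; apply: yeA.
split=> // i j; rewrite (ord1 i) -ball_normE /= mxE opprD addrA subrr sub0r normrN.
by apply: le_lt_trans (wc j) _; near: c; exact: nbhs_right_lt.
Unshelve. all: by end_near.
Qed.

Lemma near_vertex y A :
  nbhs y A -> \forall r \near 0^'+, forall i s, A (vertex y r s i).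
Proof.
move=> /nbhs_rV_add_small yA.
apply: filterS2 (nbhs_right_gt 0) yA => r r0 yrA i s; apply: yrA => j.
rewrite !mxE normrM normr_sgn (gtr0_norm r0) /=.
by case: (j == i); rewrite /= ?normr1 ?normr0 ?mulr1 ?mulr0 // ltW.
Qed.

Lemma near_orthant_box y A :
  nbhs y A -> \forall h \near 0^'+, forall (sg : 'I_n -> bool) (v : 'rV[R]_n),
    (forall i, 0 <= v 0 i <= h) -> A (y + signed sg v).
Proof.
move=> /nbhs_rV_add_small; apply: filterS => h yhA sg v vI; apply: yhA => j.
by case/andP: (vI j) => v0 vh; rewrite mxE normr_sgn ger0_norm.
Qed.

Lemma convex_fun_le_orthant_box_near (r a b eps : R) : 0 < r -> 0 < eps ->
  \forall h \near 0^'+, forall f y (sg : 'I_n -> bool) (v : 'rV[R]_n),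
    convex_fun f -> (f y <= a%:E)%E ->
    (forall i s, (f (vertex y r s i) <= b%:E)%E) ->
    (forall i, 0 <= v 0 i <= h) -> (f (y + signed sg v)%R <= (a + eps)%:E)%E.
Proof.
move=> r0 eps0; set B := `|b - a| + 1; set m := Num.min 1 eps.
have B1 : 1 <= B by rewrite lerDr.
have m0 : 0 < m by rewrite lt_min ltr01.
have B0 : 0 < B by rewrite (lt_le_trans ltr01).
have n1B0 : 0 < (n%:R + 1) * B by rewrite mulr_gt0 // ltr_wpDl.
have small : \forall h \near 0^'+, n%:R * h / r * B < m.
  near=> h; have h0 : 0 < h by near: h; exact: nbhs_right_gt.
  have : h < r * m / ((n%:R + 1) * B).
    by near: h; apply: nbhs_right_lt; rewrite divr_gt0 ?mulr_gt0.
  rewrite ltr_pdivlMr // mulrAC ltr_pdivrMr //.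
  have : 0 <= h * B by rewrite mulr_ge0 ?ltW.
  lra.
apply: filterS2 (nbhs_right_gt 0) small => h h0 tB f y sg v cf fa fb vI.
set t := n%:R * h / r in tB *.
have t0 : 0 <= t by rewrite divr_ge0 ?(ltW r0) // mulr_ge0 ?(ltW h0).
have [m1 meps] : m <= 1 /\ m <= eps by split; rewrite ge_min lexx ?orbT.
have tBE : t * B = t * `|b - a| + t by rewrite mulrDr mulr1.
have t1 : t < 1 by have := ler_peMr t0 B1; lra.
apply: le_trans (convex_fun_le_orthant_box _ _ _ _ _ _ sg _ cf r0 fa fb vI t1) _.
by rewrite lee_fin lerD2l -/t; lra.
Unshelve. all: by end_near.
Qed.

End small_boxes.

Lemma cvge_fin_bounds {R : realFieldType} {I : Type} {F : set_system I} {FF : Filter F}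
    (f : I -> \bar R) (L : R) :
  (forall e, 0 < e -> \forall k \near F, (f k < (L + e)%:E)%E) ->
  (forall e, 0 < e -> \forall k \near F, ((L - e)%:E < f k)%E) ->
  f k @[k --> F] --> L%:E.
Proof.
move=> ub lb; apply/fine_cvgP; split.
  by apply: filterS2 (ub 1 ltr01) (lb 1 ltr01) => k; case: (f k).
apply/cvgrPdist_lt => e e0; apply: filterS2 (ub e e0) (lb e e0) => k /=.
by case: (f k) => //= r; rewrite !lte_fin ltr_distlC => -> ->.
Qed.

Section delta_convergence.
Context {R : realType} {n : nat}.
Variables (zeta : R -> R) (p : R) (u_ : nat -> 'rV[R]_n -> \bar R)
  (u : 'rV[R]_n -> \bar R).
Hypotheses (p_gt0 : 0 < p) (zeta_decr : forall s t, s < t -> zeta t < zeta s)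
  (zeta_gt0 : forall t, 0 < zeta t).
Hypotheses (u_convex : convex_fun u) (u_neqNy : forall x, u x != -oo%E)
  (u_lsc : lower_semicontinuous u).
Hypotheses (uk_convex : forall k, convex_fun (u_ k))
  (uk_neqNy : forall k x, u_ k x != -oo%E).
Hypothesis delta_cvg0 : delta zeta p (u_ k) u @[k --> \oo] --> 0%E.

Lemma edom_fineK x : edom u x -> u x = (fine (u x))%:E.
Proof. by move=> ux; rewrite fineK // fin_numE u_neqNy lt_eqF. Qed.

Lemma near_delta_lt_orthant_box (h c : R) : 0 < h -> 0 < c ->
  \forall k \near \oo, forall y (sg : 'I_n -> bool),
    exists2 w : 'rV[R]_n, (forall i, 0 <= w 0 i <= h) &
      `|zeta_ext zeta (u_ k (y + signed sg w)) - zeta_ext zeta (u (y + signed sg w))| < c.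
Proof.
move=> h0 c0; set eta := (c `^ p * h ^+ n) `^ p^-1.
have eta0 : (0 < eta%:E)%E by rewrite lte_fin powR_gt0 // mulr_gt0 ?powR_gt0 ?exprn_gt0.
have small : \forall e \near 0%E, (e < eta%:E)%E by exact: open_ereal_lt'.
have dsmall : \forall k \near \oo, (delta zeta p (u_ k) u < eta%:E)%E.
  exact: delta_cvg0 small.
apply: filterS dsmall => k dk y sg.
exact: delta_lt_orthant_box (ltW h0) dk.
Qed.

Lemma near_lt_add y (eps : R) : (edom u)° y -> 0 < eps ->
  \forall k \near \oo, (u_ k y < (fine (u y) + eps)%:E)%E.
Proof.
move=> yint eps0; set L := fine (u y).
have uyE : u y = L%:E := edom_fineK _ (nbhs_singleton yint).
near (0 : R)^'+ => r.
have r0 : 0 < r by near: r; exact: nbhs_right_gt.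
have vdom : forall i s, edom u (vertex y r s i) by near: r; exact: near_vertex.
pose b := \big[Num.max/L]_(i < n)
  Num.max (fine (u (vertex y r true i))) (fine (u (vertex y r false i))).
have ub i s : (u (vertex y r s i) <= b%:E)%E.
  rewrite (edom_fineK _ (vdom i s)) lee_fin; apply: le_trans (le_bigmax _ _ i).
  by case: s; rewrite le_max lexx ?orbT.
have eps4 : 0 < eps / 4 by rewrite divr_gt0.
near (0 : R)^'+ => h.
have h0 : 0 < h by near: h; exact: nbhs_right_gt.
have ubox : forall (sg : 'I_n -> bool) (v : 'rV[R]_n),
    (forall i, 0 <= v 0 i <= h) -> (u (y + signed sg v)%R <= (L + eps / 4)%:E)%E.
  near: h; apply: filterS (convex_fun_le_orthant_box_near r L b (eps / 4) r0 eps4).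
  by move=> h ubox sg v vI; apply: (ubox _ _ _ _ u_convex _ ub vI); rewrite uyE.
set c := zeta (L + eps / 4) - zeta (L + eps / 2).
have c0 : 0 < c by rewrite subr_gt0 zeta_decr // ltrD2l; lra.
apply: filterS (near_delta_lt_orthant_box _ _ h0 c0) => k small.
rewrite ltNge; apply/negP => uk_ge.
have notin0 : ~ (u_ k (y + 0)%R <= (L + eps / 2)%:E)%E.
  by rewrite addr0 => uk_le; have := le_trans uk_ge uk_le; rewrite lee_fin; lra.
have [sg avoid] :=
  convex_orthant_avoid _ _ (convex_fun_sublevel _ _ y _ (uk_convex k)) notin0.
have [w wI gap] := small y sg.
have ukw : ((L + eps / 2)%:E < u_ k (y + signed sg w))%E.
  by rewrite ltNge; apply/negP/avoid => i; case/andP: (wI i).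
have := zeta_ext_gap _ zeta_decr zeta_gt0 _ _ _ _ (u_neqNy _) (ubox sg w wI) ukw.
by rewrite distrC -/c; lra.
Unshelve. all: by end_near.
Qed.

Lemma near_gt_sub x (eps : R) : (edom u)° x -> 0 < eps ->
  \forall k \near \oo, ((fine (u x) - eps)%:E < u_ k x)%E.
Proof.
move=> xint eps0; set L := fine (u x).
have uxE : u x = L%:E := edom_fineK _ (nbhs_singleton xint).
have [V xV uV] : exists2 V, nbhs x V & forall y, V y -> ((L - eps / 2)%:E < u y)%E.
  by apply: u_lsc; rewrite uxE lte_fin; lra.
near (0 : R)^'+ => r.
have r0 : 0 < r by near: r; exact: nbhs_right_gt.
have vint : forall i s, (edom u)° (vertex x r s i).
  by near: r; apply: near_vertex; exact: nbhs_interior.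
pose b := \big[Num.max/L]_(i < n)
  Num.max (fine (u (vertex x r true i)) + 1) (fine (u (vertex x r false i)) + 1).
have ukb : \forall k \near \oo,
    forall si : 'I_n * bool, (u_ k (vertex x r si.2 si.1) < b%:E)%E.
  apply: filter_forall => -[i s]; apply: filterS (near_lt_add _ _ (vint i s) ltr01).
  move=> k /lt_le_trans; apply; rewrite lee_fin; apply: le_trans (le_bigmax _ _ i).
  by case: s; rewrite le_max lexx ?orbT.
have eps4 : 0 < eps / 4 by rewrite divr_gt0.
near (0 : R)^'+ => h.
have h0 : 0 < h by near: h; exact: nbhs_right_gt.
have boxV : forall v : 'rV[R]_n,
    (forall i, 0 <= v 0 i <= h) -> V (x + signed (fun=> true) v).
  by near: h; apply: filterS (near_orthant_box _ _ xV) => h boxV v; exact: boxV.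
have ukbox : forall k (v : 'rV[R]_n), (u_ k x <= (L - eps)%:E)%E ->
    (forall i s, (u_ k (vertex x r s i) <= b%:E)%E) -> (forall i, 0 <= v 0 i <= h) ->
    (u_ k (x + signed (fun=> true) v)%R <= (L - eps + eps / 4)%:E)%E.
  near: h.
  apply: filterS (convex_fun_le_orthant_box_near r (L - eps) b (eps / 4) r0 eps4).
  by move=> h ubox k v uk_le vb vI; exact: ubox _ _ _ _ (uk_convex k) uk_le vb vI.
set c := zeta (L - eps + eps / 4) - zeta (L - eps / 2).
have c0 : 0 < c by rewrite subr_gt0 zeta_decr //; lra.
apply: filterS2 (near_delta_lt_orthant_box _ _ h0 c0) ukb => k small ukb_k.
rewrite ltNge; apply/negP => uk_le.
have [w wI gap] := small x (fun=> true).
have ukw := ukbox k w uk_le (fun i s => ltW (ukb_k (i, s))) wI.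
have := zeta_ext_gap _ zeta_decr zeta_gt0 _ _ _ _ (uk_neqNy _ _) ukw (uV _ (boxV w wI)).
by rewrite -/c; lra.
Unshelve. all: by end_near.
Qed.

End delta_convergence.

Theorem lemma3p8 (R : realType) (n : nat) (p : R) (zeta : R -> R)
    (u_ : nat -> 'rV[R]_n -> \bar R) (u : 'rV[R]_n -> \bar R) :
  (0 < n)%N -> 1 <= p -> M_p p n zeta ->
  (forall k, Conv_coe (u_ k)) -> Conv_coe u ->
  delta zeta p (u_ k) u @[k --> \oo] --> 0%E ->
  forall x0, (edom u)° x0 ->
    u_ k x0 @[k --> \oo] --> u x0.
Proof.
move=> _ p1 [_ zeta_decr zeta_gt0 _] Cuk [uN _ u_lsc [u_convex _ _]] delta_cvg0 x0 x0int.
have p0 : 0 < p by apply: lt_le_trans p1.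
have uk_convex k : convex_fun (u_ k) by have [_ _ _ []] := Cuk k.
have ukN k : forall x, u_ k x != -oo%E by have [] := Cuk k.
rewrite (edom_fineK _ uN _ (nbhs_singleton x0int)).
apply: cvge_fin_bounds => eps eps0.
- exact: (near_lt_add _ _ _ _ p0 zeta_decr zeta_gt0 u_convex uN uk_convex
    delta_cvg0 _ _ x0int eps0).
- exact: (near_gt_sub _ _ _ _ p0 zeta_decr zeta_gt0 u_convex uN u_lsc uk_convex ukN
    delta_cvg0 _ _ x0int eps0).
Qed.
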